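(* Let $X$ be an amoebot structure with $n$ amoebots forming a line (a straight segment of consecutive grid nodes along one axis), and let $S\subseteq X$ be non-empty, each amoebot knowing whether it belongs to $S$. There is an algorithm in the reconfigurable circuit model (the line algorithm) that computes an $S$-shortest path forest within $O(\log n)$ rounds.
   Context: Geometric amoebot model with reconfigurable circuits: $G_\Delta$ is the infinite regular triangular grid graph; an amoebot structure is a finite set $X$ of grid nodes, each occupied by an anonymous constant-memory amoebot, with $G_X=(X,E_X)$ the induced (connected) subgraph. Each edge of $G_X$ is replaced by a constant number of external links with pins at both endpoints (labeling agreed by neighbors); each amoebot partitions its pins into partition sets; circuits are connected components of the graph on all partition sets joined by external links. In synchronous rounds every amoebot may update its state, change its partition and beep on partition sets; beeps are received at the start of the next round by all partition sets of the same circuit (without sender identity or count). Amoebots share compass orientation and chirality. An $S$-shortest path forest is a family of rooted trees $T_s=(V_s,E_s)$, $s\in S$, $V_s\subseteq X$, $E_s\subseteq E_X$, rooted at $s$, with pairwise disjoint $V_s$ covering $X$, such that for every $u\in V_s$ the tree path from $s$ to $u$ is a shortest path in $G_X$ and $s$ is a closest amoebot of $S$ to $u$; computing it means every amoebot not in $S$ knows its parent. *)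

From mathcomp Require Import all_boot all_algebra.
Set Implicit Arguments. Unset Strict Implicit. Unset Printing Implicit Defensive.
Import GRing.Theory Num.Theory.

(* Global compass directions (shared orientation and chirality):
   0 = E, 1 = NE, 2 = NW, 3 = W, 4 = SW, 5 = SE (counter-clockwise). *)
Definition node := (int * int)%type.

Definition dirvec (e : 'I_6) : node :=
  match val e with
  | 0 => (Posz 1, Posz 0) | 1 => (Posz 0, Posz 1) | 2 => ((-1)%R, Posz 1)
  | 3 => ((-1)%R, Posz 0) | 4 => (Posz 0, (-1)%R) | _ => (Posz 1, (-1)%R)
  end.

Definition addv (x y : node) : node := ((x.1 + y.1)%R, (x.2 + y.2)%R).

Definition opp (e : 'I_6) : 'I_6 := inord ((val e + 3) %% 6).

Definition pos (n : nat) (o : node) (d : 'I_6) (i : 'I_n) : node :=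
  ((o.1 + Posz (val i) * (dirvec d).1)%R, (o.2 + Posz (val i) * (dirvec d).2)%R).

Definition nbr (n : nat) (o : node) (d : 'I_6) (i : 'I_n) (e : 'I_6) : option 'I_n :=
  [pick j : 'I_n | pos o d j == addv (pos o d i) (dirvec e)].

Definition adjX (n : nat) (o : node) (d : 'I_6) : rel 'I_n :=
  fun i j => [exists e : 'I_6, pos o d j == addv (pos o d i) (dirvec e)].

(* Each edge carries k external links; pin (e, c) of an amoebot is the c-th pin
   on its side facing direction e.  The external link c between u and its
   neighbour v in direction e joins pin (e, c) of u with pin (opp e, c) of v. *)
Definition pin (k : nat) := ('I_6 * 'I_k)%type.

(* A uniform algorithm for anonymous constant-memory amoebots: finite state
   space Q, k pins per edge.  Partition sets are labelled by pins
   (part q p = label of the partition set containing pin p). *)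
Record algorithm (Q : finType) (k : nat) := Algorithm {
  init  : bool -> {ffun 'I_6 -> bool} -> Q;  (* in S? / occupied neighbour directions *)
  part  : Q -> pin k -> pin k;
  beep  : Q -> pin k -> bool;                (* beep on partition set with this label *)
  delta : Q -> {ffun pin k -> bool} -> Q;
  out   : Q -> option 'I_6                   (* direction of the parent (None = no parent) *)
}.

Section Semantics.
Variables (Q : finType) (k : nat) (A : algorithm Q k).
Variables (n : nat) (o : node) (d : 'I_6).

(* graph on (amoebot, partition-set label), joined by external links *)
Definition link (c : 'I_n -> Q) : rel ('I_n * pin k) :=
  fun x y => [exists p : pin k,
    [&& part A (c x.1) p == x.2, nbr o d x.1 p.1 == Some y.1
      & part A (c y.1) (opp p.1, p.2) == y.2]].

Definition recv (c : 'I_n -> Q) (u : 'I_n) : {ffun pin k -> bool} :=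
  [ffun l => [exists v : 'I_n, exists p : pin k,
     beep A (c v) (part A (c v) p) && connect (link c) (v, part A (c v) p) (u, l)]].

Definition occupied (i : 'I_n) : {ffun 'I_6 -> bool} :=
  [ffun e => nbr o d i e != None].

Fixpoint run (S : {set 'I_n}) (t : nat) : 'I_n -> Q :=
  match t with
  | 0 => fun i => init A (i \in S) (occupied i)
  | t'.+1 => let c := run S t' in fun i => delta A (c i) (recv c i)
  end.

Definition parent_at (S : {set 'I_n}) (t : nat) (i : 'I_n) : option 'I_n :=
  obind (nbr o d i) (out A (run S t i)).

End Semantics.

(* Rooted trees given by parent pointers: roots are exactly S, each parent is
   a G_X-neighbour, every u reaches its root s (the first element of S met when
   following parents) after m steps, and this tree path is no longer than any
   walk in G_X from u to any element of S (so it is a shortest path and s is a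
   closest element of S). *)
Definition is_SPF (n : nat) (adj : rel 'I_n) (S : {set 'I_n})
    (par : 'I_n -> option 'I_n) : Prop :=
  let step := fun x => odflt x (par x) in
  [/\ (forall u, par u = None <-> u \in S),
      (forall u v, par u = Some v -> adj u v) &
      (forall u, exists m (s : 'I_n),
         [/\ s \in S, iter m step u = s,
             (forall j, j < m -> iter j step u \notin S) &
             (forall (s' : 'I_n) (p : seq 'I_n),
                 s' \in S -> path adj u p -> last u p = s' -> m <= size p)])].

From mathcomp Require Import all_boot order ssralg ssrint zify.
Import Order.TTheory.
Set Implicit Arguments. Unset Strict Implicit. Unset Printing Implicit Defensive.

(* Two chains of circuits run along the line, one in each direction.  In a
   chain, sources isolate their pins, so every segment between consecutive
   sources forms two lanes, and each active amoebot crosses them: a beep sent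
   by a source on lane 0 reaches an amoebot on the lane given by the parity of
   the number of active amoebots in between.  Amoebots hearing lane 1 become
   inactive, so after j rounds the active amoebots are those whose gap to the
   source behind them is divisible by 2^j, and the lane heard in round j is
   bit j of that gap.  Comparing the two gaps bit by bit, least significant
   bit first, after trunc_log 2 n + 1 rounds every amoebot points to a closest
   source; then the distance to S drops by one along every parent pointer,
   which makes the pointers a shortest path forest. *)

Lemma modn_exp2S D j : D %% 2 ^ j.+1 = odd (D %/ 2 ^ j) * 2 ^ j + D %% 2 ^ j.
Proof.
have pos2j : 0 < 2 ^ j by rewrite expn_gt0.
rewrite {1}(divn_eq D (2 ^ j)) {1}(divn_eq (D %/ 2 ^ j) 2) expnS.
rewrite mulnDl -mulnA -addnA [2 * _]mulnC modnMDl modn_small modn2 //.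
by have := ltn_pmod D pos2j; case: odd; lia.
Qed.

Lemma dvdn_exp2S D j : (2 ^ j.+1 %| D) = (2 ^ j %| D) && ~~ odd (D %/ 2 ^ j).
Proof. by rewrite /dvdn modn_exp2S addn_eq0 muln_eq0 expn_eq0 orbF eqb0 andbC. Qed.

(* The least-significant-bit-first comparison performed by [line_delta]. *)
Lemma leq_mod_exp2S a b j : (a %% 2 ^ j.+1 <= b %% 2 ^ j.+1) =
  (if odd (a %/ 2 ^ j) == odd (b %/ 2 ^ j) then a %% 2 ^ j <= b %% 2 ^ j
   else odd (b %/ 2 ^ j)).
Proof.
have pos2j : 0 < 2 ^ j by rewrite expn_gt0.
rewrite !modn_exp2S; have := ltn_pmod a pos2j; have := ltn_pmod b pos2j.
by case: (odd (a %/ _)); case: (odd (b %/ _)) => /= ? ?; apply/idP/idP; lia.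
Qed.

(** * Scanning positions for the nearest source *)


Fixpoint last_src (src : pred nat) (m : nat) : option nat :=
  if src m then Some m else if m is m'.+1 then last_src src m' else None.

Fixpoint parity_since_src (src act : pred nat) (m : nat) : bool :=
  if src m then false
  else act m (+) (if m is m'.+1 then parity_since_src src act m' else false).

Section LastSource.
Variable src : pred nat.

Lemma last_src_at_src m : src m -> last_src src m = Some m.
Proof. by case: m => [|m] /= ->. Qed.

Lemma parity_since_src_at_src act m : src m -> parity_since_src src act m = false.
Proof. by case: m => [|m] /= ->. Qed.

Lemma last_src_SomeP m q : last_src src m = Some q ->
  [/\ q <= m, src q & forall i, q < i <= m -> ~~ src i].
Proof.
elim: m => [|m IH] /=; case: ifP => [src_m [<-] | src_m] //.
- by split=> // i; lia.
- by split=> // i; lia.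
case/IH=> [le_qm src_q no_src]; split=> //; first lia.
move=> i /andP[lt_qi]; rewrite leq_eqVlt => /orP[/eqP-> | lt_im]; first by rewrite src_m.
by apply: no_src; rewrite lt_qi.
Qed.

Lemma last_src_NoneP m : last_src src m = None -> forall i, i <= m -> ~~ src i.
Proof.
elim: m => [|m IH] /=; case: ifP => // src_m.
  by move=> _ i; rewrite leqn0 => /eqP->; rewrite src_m.
move/IH=> no_src i; rewrite leq_eqVlt => /orP[/eqP-> | ]; [by rewrite src_m | exact: no_src].
Qed.

(* The active positions after the source [q] are those at a multiple of [K]
   from it, and there are [(m - q) %/ K] of them up to [m]. *)
Lemma parity_since_src_div act K m q : 0 < K ->
  (forall i q', i <= m -> ~~ src i -> last_src src i = Some q' -> act i = (K %| i - q')) ->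
  last_src src m = Some q -> parity_since_src src act m = odd ((m - q) %/ K).
Proof.
move=> K_gt0; elim: m => [|m IH] act_div /=; case: ifP => [_ [<-] | src_m] //;
  rewrite ?subnn ?div0n //.
move=> last_m; have [le_qm _ _] := last_src_SomeP last_m.
have act_m : act m.+1 = (K %| m.+1 - q) by apply: act_div => //=; rewrite src_m.
rewrite act_m IH // => [|i q' le_im]; last by apply: act_div; lia.
by rewrite subSn // divnS // oddD; case: (K %| _); case: odd.
Qed.

End LastSource.

Lemma oppK : involutive opp.
Proof. by case=> [[|[|[|[|[|[|e]]]]]] ?] //; apply/val_inj; rewrite /opp /= ?inordK. Qed.

Lemma opp_neq (e : 'I_6) : opp e != e.
Proof. by case: e => [[|[|[|[|[|[|e]]]]]] ?] //; rewrite -val_eqE /opp /= ?inordK. Qed.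

Lemma opp_eqF (e : 'I_6) : (opp e == e) = false.
Proof. exact/negbTE/opp_neq. Qed.

Lemma eq_oppF (e : 'I_6) : (e == opp e) = false.
Proof. by rewrite eq_sym opp_eqF. Qed.

Lemma opp_mod3 (e : 'I_6) : opp e %% 3 = e %% 3.
Proof. by case: e => [[|[|[|[|[|[|e]]]]]] ?] //; rewrite /opp /= ?inordK. Qed.

Section LineGeometry.
Variables (n : nat) (o : node) (d : 'I_6).

Lemma pos_inj : injective (@pos n o d).
Proof.
case: o => o1 o2 i j; case: d => [[|[|[|[|[|[|dd]]]]]] ?] //;
by rewrite /pos /dirvec /= => -[] *; apply: ord_inj; lia.
Qed.

Lemma pos_shiftE (i j : 'I_n) e :
  (pos o d j == addv (pos o d i) (dirvec e)) =
  ((e == d) && (j == i.+1 :> nat)) || ((e == opp d) && (j.+1 == i :> nat)).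
Proof.
case: o => o1 o2.
case: d => [[|[|[|[|[|[|dd]]]]]] ?] //; case: e => [[|[|[|[|[|[|ee]]]]]] ?] //;
rewrite /pos /addv /dirvec /opp /= -!val_eqE /= ?inordK //=;
apply/idP/idP; rewrite ?xpair_eqE; lia.
Qed.

Lemma nbr_lineP (i j : 'I_n) e : nbr o d i e = Some j <->
  (e = d /\ j = i.+1 :> nat) \/ (e = opp d /\ j.+1 = i :> nat).
Proof.
have -> : nbr o d i e = Some j <-> pos o d j == addv (pos o d i) (dirvec e).
  rewrite /nbr; case: pickP => [j' /eqP pos_j' | no_j]; last by rewrite no_j.
  by split=> [[<-] | /eqP]; [rewrite pos_j' | rewrite -pos_j' => /pos_inj ->].
rewrite pos_shiftE; split=> [|[[-> ->] | [-> ->]]]; rewrite ?eqxx ?orbT //.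
by case/orP=> /andP[/eqP-> /eqP->]; [left | right].
Qed.

Lemma nbr_adjX (i j : 'I_n) e : nbr o d i e = Some j -> adjX o d i j.
Proof.
move/nbr_lineP=> ij; apply/existsP; exists e; rewrite pos_shiftE.
by case: ij => -[-> ->]; rewrite !eqxx ?orbT.
Qed.

End LineGeometry.

Record oriented_line n (nb : 'I_n -> 'I_6 -> option 'I_n) (F B : 'I_6)
    (tau : 'I_n -> nat) : Prop := OrientedLine {
  line_bwd : B = opp F;
  line_fwdP : forall x y, nb x F = Some y <-> tau y = (tau x).+1;
  line_bwdP : forall x y, nb x B = Some y <-> (tau y).+1 = tau x;
  line_other : forall x e, e != F -> e != B -> nb x e = None;
  line_inj : injective tau;
  line_lt : forall x, tau x < n;
  line_onto : forall m, m < n -> exists x, tau x = m }.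

Lemma oriented_line_rev n nb F B (tau : 'I_n -> nat) :
  oriented_line nb F B tau -> oriented_line nb B F (fun x => n.-1 - tau x).
Proof.
case=> B_opp fwdP bwdP other tau_inj tau_lt onto.
split=> [|x y|x y|x e|x y|x|m lt_mn].
- by rewrite B_opp oppK.
- by rewrite bwdP; have := tau_lt x; have := tau_lt y; lia.
- by rewrite fwdP; have := tau_lt x; have := tau_lt y; lia.
- by move=> *; rewrite other.
- by move=> eq_xy; apply: tau_inj; move: eq_xy (tau_lt x) (tau_lt y); lia.
- by have := tau_lt x; lia.
- by have [x tau_x] := onto (n.-1 - m) ltac:(lia); exists x; lia.
Qed.

(* [fwd d] is the direction every amoebot of the line computes as [e %% 3]
   from any occupied neighbour direction [e]; [coordL] increases along it. *)
Definition fwd (d : 'I_6) : 'I_6 := inord (d %% 3).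

Definition coordL n (d : 'I_6) (x : 'I_n) : nat := if d < 3 then nat_of_ord x else n.-1 - x.

Lemma line_oriented_val n o d : oriented_line (nbr o d) d (opp d) (@nat_of_ord n).
Proof.
split=> // [x y|x y|x e||m lt_mn]; rewrite ?nbr_lineP.
- by split=> [[[_ ->] | [/eqP]] | ]; [| rewrite eq_oppF | left].
- by split=> [[[/eqP] | [_ ->]] | ]; [rewrite opp_eqF | | right].
- by move=> e_d e_opp; case E: nbr => [y|] //; case/nbr_lineP: E => -[E' _];
    [move: e_d | move: e_opp]; rewrite E' eqxx.
- exact: ord_inj.
- by exists (Ordinal lt_mn).
Qed.

Lemma line_oriented n o d :
  oriented_line (nbr o d) (fwd d) (opp (fwd d)) (@coordL n d).
Proof.
rewrite /coordL; case: ltnP => d3.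
  have -> : fwd d = d by apply/val_inj; rewrite /= inordK ?modn_small //; lia.
  exact: line_oriented_val.
have -> : fwd d = opp d.
  by apply/val_inj; move: d3; case: d => [[|[|[|[|[|[|dd]]]]]] ?]; rewrite /fwd /opp //= !inordK.
by rewrite oppK; apply/oriented_line_rev/line_oriented_val.
Qed.

Lemma adjX_coordL n o d (i j : 'I_n) : adjX o d i j -> `|coordL d i - coordL d j| = 1.
Proof.
case/existsP=> e; rewrite pos_shiftE /coordL => /orP[] /andP[_ /eqP];
by have := ltn_ord i; have := ltn_ord j; case: ifP; lia.
Qed.

Definition at_pos n (tau : 'I_n -> nat) (P : {pred 'I_n}) (m : nat) : bool :=
  [exists x, (tau x == m) && (x \in P)].

Lemma at_pos_tau n (tau : 'I_n -> nat) (P : {pred 'I_n}) x :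
  injective tau -> at_pos tau P (tau x) = (x \in P).
Proof.
move=> tau_inj; apply/existsP/idP => [[y /andP[/eqP/tau_inj-> //]] | Px].
by exists x; rewrite eqxx.
Qed.

Lemma at_posP n (tau : 'I_n -> nat) (P : {pred 'I_n}) m :
  at_pos tau P m -> exists2 x, x \in P & tau x = m.
Proof. by case/existsP=> x /andP[/eqP <- Px]; exists x. Qed.

Definition dist_to n (S : {set 'I_n}) (tau : 'I_n -> nat) (x : 'I_n) : nat :=
  \big[minn/n]_(s in S) `|tau x - tau s|.

Section DistTo.
Variables (n : nat) (S : {set 'I_n}) (tau : 'I_n -> nat).
Hypothesis tau_lt : forall x, tau x < n.

Lemma dist_to_le x s : s \in S -> dist_to S tau x <= `|tau x - tau s|.
Proof.
by move=> Ss; rewrite /dist_to -minEnat -leEnat; exact: bigmin_le_cond.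
Qed.

Lemma dist_to_ge x k : k <= n -> (forall s, s \in S -> k <= `|tau x - tau s|) ->
  k <= dist_to S tau x.
Proof.
by move=> le_kn le_k; rewrite /dist_to -minEnat -leEnat; apply/bigmin_geP.
Qed.

Lemma dist_to_src x : x \in S -> dist_to S tau x = 0.
Proof. by move=> Sx; apply/eqP; rewrite -leqn0; apply: leq_trans (dist_to_le x Sx) _; lia. Qed.

Lemma dist_to_closest x s : s \in S ->
  (forall s', s' \in S -> `|tau x - tau s| <= `|tau x - tau s'|) ->
  dist_to S tau x = `|tau x - tau s|.
Proof.
move=> Ss closest; apply/eqP; rewrite eqn_leq dist_to_le // dist_to_ge //.
by have := tau_lt x; have := tau_lt s; lia.
Qed.

Lemma dist_to_lipschitz a b : `|tau a - tau b| = 1 -> dist_to S tau a <= (dist_to S tau b).+1.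
Proof.
move=> dist_ab; rewrite {2}/dist_to; elim/big_ind: _ => [||s Ss].
- by rewrite ltnW // ltnS /dist_to -minEnat -leEnat bigmin_le_id.
- by move=> u v ? ?; rewrite /minn; case: ltnP.
- by apply: leq_trans (dist_to_le a Ss) _; lia.
Qed.

End DistTo.

Lemma dist_to_compl n (S : {set 'I_n}) (tau tau' : 'I_n -> nat) :
  (forall x, tau x + tau' x = n.-1) -> dist_to S tau =1 dist_to S tau'.
Proof.
move=> tau_compl x; apply: eq_bigr => s _.
by have := tau_compl x; have := tau_compl s; lia.
Qed.

Lemma is_SPF_of_potential n (adj : rel 'I_n) (S : {set 'I_n})
    (par : 'I_n -> option 'I_n) (D : 'I_n -> nat) :
  (forall u, u \in S -> par u = None) ->
  (forall u, u \in S -> D u = 0) ->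
  (forall u, u \notin S -> exists y, [/\ par u = Some y, adj u y & (D y).+1 = D u]) ->
  (forall a b, adj a b -> D a <= (D b).+1) ->
  is_SPF adj S par.
Proof.
move=> par_src D_src par_step D_lip; split.
- move=> u; split=> [|/par_src //]; case: (boolP (u \in S)) => // Su.
  by have [y [-> _ _]] := par_step u Su.
- move=> u v; case: (boolP (u \in S)) => Su; first by rewrite par_src.
  by have [y [-> adj_uy _]] := par_step u Su => -[<-].
set step := fun x => odflt x (par x).
have iter_step k u : D u = k ->
    iter k step u \in S /\ (forall j, j < k -> iter j step u \notin S).
  elim: k u => [|k IH] u Du.
    split=> //=; apply/negPn/negP => /par_step[y [_ _]].
    by rewrite Du.
  have Su : u \notin S by apply/negP => /D_src; rewrite Du.
  have [y [par_u _ Dy]] := par_step u Su.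
  have step_u : step u = y by rewrite /step par_u.
  have [IH1 IH2] := IH y ltac:(by move: Dy; rewrite Du => -[]).
  split; first by rewrite iterSr step_u.
  by case=> [|j] lt_jk //; rewrite iterSr step_u; apply: IH2.
have D_path u p : path adj u p -> D u <= D (last u p) + size p.
  elim: p u => [|z p IH] u /=; first by rewrite addn0.
  by case/andP=> /D_lip ? /IH ?; lia.
move=> u; exists (D u), (iter (D u) step u).
have [S_end not_S] := iter_step (D u) u erefl.
split=> // s' p Ss' /D_path + last_p.
by rewrite last_p (D_src _ Ss').
Qed.

Definition src_gap n (S : {set 'I_n}) (tau : 'I_n -> nat) (x : 'I_n) : option nat :=
  omap (fun q => tau x - q) (last_src (at_pos tau S) (tau x)).

Lemma has_src_gap n (S : {set 'I_n}) (tau : 'I_n -> nat) x :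
  (last_src (at_pos tau S) (tau x) != None) = (src_gap S tau x != None).
Proof. by rewrite /src_gap; case: last_src. Qed.

Section SourceGap.
Variables (n : nat) (S : {set 'I_n}) (tau : 'I_n -> nat).
Hypothesis tau_inj : injective tau.

Lemma src_gapP x g : src_gap S tau x = Some g ->
  exists2 s, s \in S & tau s + g = tau x /\
    forall s', s' \in S -> tau s' <= tau x -> tau s' + g <= tau x.
Proof.
rewrite /src_gap; case E: last_src => [q|] // [<-].
have [le_qx /at_posP[s Ss tau_s] gap] := last_src_SomeP E.
exists s => //; split=> [|s' Ss' le_s'x]; first lia.
rewrite leqNgt; apply: contraTN Ss' => lt_s'x; have := gap (tau s').
by rewrite at_pos_tau //; apply; lia.
Qed.

Lemma src_gap_None x : src_gap S tau x = None -> forall s, s \in S -> tau x < tau s.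
Proof.
rewrite /src_gap; case E: last_src => // _ s Ss; rewrite ltnNge.
by apply: contraTN Ss => /(last_src_NoneP E); rewrite at_pos_tau.
Qed.

End SourceGap.

Section ParityGap.
Variables (n : nat) (nb : 'I_n -> 'I_6 -> option 'I_n) (F B : 'I_6).
Variables (tau : 'I_n -> nat) (S : {set 'I_n}) (act : {pred 'I_n}) (K : nat).
Hypothesis line : oriented_line nb F B tau.
Hypothesis K_gt0 : 0 < K.
Hypothesis act_gap : forall y g, y \notin S -> src_gap S tau y = Some g -> (y \in act) = (K %| g).

Lemma parity_since_src_gap x g : src_gap S tau x = Some g ->
  parity_since_src (at_pos tau S) (at_pos tau act) (tau x) = odd (g %/ K).
Proof.
case: line => _ _ _ _ tau_inj tau_lt onto.
rewrite /src_gap; case E: last_src => [q|] // [<-].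
apply: parity_since_src_div => // i q' le_ix Si last_i.
have [y tau_y] := onto i ltac:(by have := tau_lt x; lia).
rewrite -tau_y !at_pos_tau // in Si *; apply: act_gap Si _.
by rewrite /src_gap tau_y last_i.
Qed.

End ParityGap.

Section CloserBehind.
Variables (n : nat) (nb : 'I_n -> 'I_6 -> option 'I_n) (F B : 'I_6).
Variables (tau tau' : 'I_n -> nat) (S : {set 'I_n}).
Hypothesis line : oriented_line nb F B tau.
Hypothesis tau_compl : forall x, tau x + tau' x = n.-1.

(* [tau'] is the coordinate of the opposite orientation, so [src_gap S tau' x]
   is the gap to the nearest source ahead of [x]. *)
Lemma closer_behind x g : x \notin S -> src_gap S tau x = Some g ->
  (if src_gap S tau' x is Some g' then g <= g' else true) ->
  exists y, nb x B = Some y /\ (dist_to S tau y).+1 = dist_to S tau x.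
Proof.
case: line => _ _ bwdP _ tau_inj tau_lt onto Sx /(src_gapP tau_inj) [s Ss [tau_s behind]] pref.
have tau'_inj : injective tau'.
  by move=> a b eq_ab; apply: tau_inj; have := tau_compl a; have := tau_compl b; lia.
have g_gt0 : 0 < g.
  by rewrite lt0n; apply: contraNneq Sx => g0; rewrite -(tau_inj s x) // -tau_s g0 addn0.
have [y tau_y] := onto (tau x).-1 ltac:(have := tau_lt x; lia).
have nb_xy : nb x B = Some y by apply/bwdP; lia.
exists y; split=> //.
have closest s' : s' \in S -> `|tau x - tau s| <= `|tau x - tau s'|.
  move=> Ss'; case: (leqP (tau s') (tau x)) => [/(behind s' Ss') | lt_xs']; first lia.
  have := tau_compl x; have := tau_compl s'; move: pref.
  case E': (src_gap S tau' x) => [g'|] pref; last by have := src_gap_None tau'_inj E' Ss'; lia.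
  have [_ _ [_ ahead]] := src_gapP tau'_inj E'.
  have := ahead s' Ss'; lia.
have Dx : dist_to S tau x = g by rewrite (dist_to_closest tau_lt Ss closest); lia.
have := dist_to_le tau y Ss; have := dist_to_lipschitz S (tau := tau) (a := x) (b := y).
by rewrite Dx; lia.
Qed.

End CloserBehind.

(** * The line algorithm *)

(* A state records: membership in [S]; the forward direction; the activity
   bits of the left and right chains; whether a source lies to the left / to
   the right; and whether the left gap is at most the right gap modulo the
   powers of two compared so far. *)
Definition state := ((bool * 'I_6) * ((bool * bool) * ((bool * bool) * bool)))%type.
Definition st_src (q : state) := q.1.1.
Definition st_fwd (q : state) := q.1.2.
Definition st_actL (q : state) := q.2.1.1.
Definition st_actR (q : state) := q.2.1.2.
Definition st_seenL (q : state) := q.2.2.1.1.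
Definition st_seenR (q : state) := q.2.2.1.2.
Definition st_leq (q : state) := q.2.2.2.
Definition mk_state src F actL actR seenL seenR le : state :=
  ((src, F), ((actL, actR), ((seenL, seenR), le))).

(* Lanes 0 and 1 carry the left chain, lanes 2 and 3 the right chain. *)
Definition lane (i : nat) : 'I_4 := inord i.
Definition right_lane (l : 'I_4) : bool := 2 <= l.
Definition swap_lane (l : 'I_4) : 'I_4 := inord (if odd l then l.-1 else l.+1).

(* A non-source connects each lane of the left chain from its backward to its
   forward side, and each lane of the right chain the other way round, crossing
   the two lanes of a chain while it is active in it; a source isolates every
   pin.  Partition sets are labelled by one of their pins. *)
Definition line_part (q : state) (p : pin 4) : pin 4 :=
  if st_src q then p
  else if (p.1 == opp (st_fwd q)) && (p.2 < 2) then
    (st_fwd q, if st_actL q then swap_lane p.2 else p.2)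
  else if (p.1 == st_fwd q) && (2 <= p.2) then
    (opp (st_fwd q), if st_actR q then swap_lane p.2 else p.2)
  else p.

Definition line_beep (q : state) (l : pin 4) : bool :=
  st_src q && ((l == (st_fwd q, lane 0)) || (l == (opp (st_fwd q), lane 2))).

Definition line_delta (q : state) (rec : {ffun pin 4 -> bool}) : state :=
  if st_src q then q else
  let r0 := rec (st_fwd q, lane 0) in let r1 := rec (st_fwd q, lane 1) in
  let r2 := rec (opp (st_fwd q), lane 2) in let r3 := rec (opp (st_fwd q), lane 3) in
  mk_state false (st_fwd q) (st_actL q && ~~ r1) (st_actR q && ~~ r3) (r0 || r1) (r2 || r3)
    (if r1 == r3 then st_leq q else r3).

Definition line_init (s : bool) (occ : {ffun 'I_6 -> bool}) : state :=
  mk_state s (if [pick e | occ e] is Some e then inord (e %% 3) else ord0)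
    true true false false true.

Definition line_out (q : state) : option 'I_6 :=
  if st_src q then None
  else if st_seenL q && (~~ st_seenR q || st_leq q) then Some (opp (st_fwd q))
  else if st_seenR q then Some (st_fwd q) else None.

Definition line_algorithm : algorithm state 4 :=
  Algorithm line_init line_part line_beep line_delta line_out.

Lemma lane_cases (l : 'I_4) : [\/ l = lane 0, l = lane 1, l = lane 2 | l = lane 3].
Proof.
by case: l => [[|[|[|[|l]]]] ?] //; [constructor 1|constructor 2|constructor 3|constructor 4];
  apply/val_inj; rewrite /= inordK.
Qed.

Lemma right_lane_lane k : k < 4 -> right_lane (lane k) = (2 <= k).
Proof. by move=> lt_k4; rewrite /right_lane inordK. Qed.

Lemma swap_lane_lane k : k < 4 -> swap_lane (lane k) = lane (if odd k then k.-1 else k.+1).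
Proof. by move=> lt_k4; rewrite /swap_lane inordK. Qed.

Lemma lane_eq k k' : k < 4 -> k' < 4 -> (lane k == lane k') = (k == k').
Proof. by move=> *; rewrite -val_eqE /= !inordK. Qed.

Lemma right_lane_part q p : right_lane (line_part q p).2 = right_lane p.2.
Proof.
rewrite /line_part; case: ifP => // _.
case: p => e [[|[|[|[|l]]]] ?] //=; rewrite ?andbF ?andbT;
  by repeat case: ifP => //= _; rewrite /swap_lane /right_lane /= inordK.
Qed.

(** * Circuits along a chain *)

Section ChainCircuit.
Variables (n : nat) (o : node) (d : 'I_6) (c : 'I_n -> state) (S : {set 'I_n}).
Variables (F B : 'I_6) (tau : 'I_n -> nat) (l0 l1 : 'I_4) (side : bool).
Variable act : {pred 'I_n}.
Hypothesis line : oriented_line (nbr o d) F B tau.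
Hypothesis side_l0 : right_lane l0 = side.
Hypothesis side_l1 : right_lane l1 = side.
Hypothesis l0_neq_l1 : l0 != l1.
Hypothesis side_lanes : forall l, right_lane l = side -> l = l0 \/ l = l1.
Hypothesis c_src : forall x, st_src (c x) = (x \in S).
Hypothesis part_fwd : forall x l, x \notin S -> right_lane l = side ->
  line_part (c x) (F, l) = (F, l).
Hypothesis part_bwd : forall x (b : bool), x \notin S ->
  line_part (c x) (B, if b then l1 else l0) = (F, if b (+) (x \in act) then l1 else l0).
Hypothesis beep_side : forall x l, line_beep (c x) l -> right_lane l.2 = side -> l = (F, l0).
Hypothesis beep_src : forall x, x \in S -> line_beep (c x) (F, l0).

Local Notation lanes b := (if b then l1 else l0).
Local Notation src := (at_pos tau S).
Local Notation parity := (parity_since_src (at_pos tau S) (at_pos tau act)).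
Local Notation linked := (link line_algorithm o d c).

Lemma part_src x p : x \in S -> line_part (c x) p = p.
Proof. by move=> Sx; rewrite /line_part c_src Sx. Qed.

Lemma lanesK b : (lanes b == l1) = b.
Proof. by case: b; rewrite ?eqxx // (negbTE l0_neq_l1). Qed.

Lemma side_lanesb b : right_lane (lanes b) = side.
Proof. by case: b. Qed.

(* Each circuit of the chain is identified by the nearest source behind it
   together with the lane parity; [None] marks labels outside the chain. *)
Definition chain_label (a : 'I_n * pin 4) : option (option nat * bool) :=
  let: (x, (e, l)) := a in
  if right_lane l != side then None
  else if e == F then Some (last_src src (tau x), (l == l1) (+) parity (tau x))
  else if (e == B) && (0 < tau x) then
    Some (last_src src (tau x).-1, (l == l1) (+) parity (tau x).-1)
  else None.

Lemma chain_label_off x p : right_lane p.2 != side -> chain_label (x, p) = None.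
Proof. by case: p => e l /= ->. Qed.

Lemma chain_label_fwd x b :
  chain_label (x, line_part (c x) (F, lanes b)) = Some (last_src src (tau x), b (+) parity (tau x)).
Proof.
have -> : line_part (c x) (F, lanes b) = (F, lanes b).
  by case: (boolP (x \in S)) => Sx; [rewrite part_src | rewrite part_fwd ?side_lanesb].
by rewrite /chain_label side_lanesb !eqxx lanesK.
Qed.

Lemma chain_label_bwd x m b : tau x = m.+1 ->
  chain_label (x, line_part (c x) (B, lanes b)) = Some (last_src src m, b (+) parity m).
Proof.
have B_neq_F : (B == F) = false by case: line => -> *; rewrite opp_eqF.
have [_ _ _ _ tau_inj _ _] := line.
move=> tau_x; case: (boolP (x \in S)) => Sx.
  by rewrite part_src // /chain_label side_lanesb B_neq_F !eqxx tau_x lanesK.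
rewrite part_bwd // /chain_label side_lanesb !eqxx lanesK /=.
rewrite tau_x /= -tau_x !at_pos_tau // (negbTE Sx).
by case: (x \in act); case: b; rewrite //= ?negbK.
Qed.

Lemma chain_label_link a a' : linked a a' -> chain_label a = chain_label a'.
Proof.
case: a a' => x lx [y ly] /existsP[[e l] /and3P[/eqP part_x /eqP nb_xy /eqP part_y]].
rewrite /= in part_x nb_xy part_y; subst lx ly.
case: (boolP (right_lane l == side)) => [/eqP side_l | side_l]; last first.
  by rewrite !chain_label_off ?right_lane_part.
case: line => B_opp fwdP bwdP other _ _ _.
have [b ->] : exists b, l = lanes b by case/side_lanes: side_l => ->; [exists false | exists true].
case: (eqVneq e F) nb_xy => [-> | e_F] nb_xy.
  by rewrite chain_label_fwd -B_opp (chain_label_bwd _ ((fwdP _ _).1 nb_xy)).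
case: (eqVneq e B) nb_xy => [-> | e_B] nb_xy; last by rewrite other in nb_xy.
have -> : opp B = F by rewrite B_opp oppK.
by rewrite chain_label_fwd (chain_label_bwd _ (esym ((bwdP _ _).1 nb_xy))).
Qed.

Lemma chain_label_connect a a' : connect linked a a' -> chain_label a = chain_label a'.
Proof.
by case/connectP=> p + ->; elim: p a => //= a'' p IH a /andP[/chain_label_link -> /IH].
Qed.

Lemma chain_reach x : last_src src (tau x) != None ->
  exists v, line_beep (c v) (line_part (c v) (F, l0)) /\
    connect linked (v, line_part (c v) (F, l0)) (x, line_part (c x) (F, lanes (parity (tau x)))).
Proof.
case: line => B_opp fwdP _ _ tau_inj tau_lt onto.
move tau_x: (tau x) => m; elim: m x tau_x => [|m IH] x tau_x /=;
  have src_x : at_pos tau S _ = (x \in S) := at_pos_tau S x tau_inj;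
  rewrite tau_x in src_x; rewrite src_x; case: ifP => [Sx _ | Sx] //;
  try by exists x; rewrite part_src // beep_src.
have [y tau_y] := onto m ltac:(by have := tau_lt x; lia).
case/(IH y tau_y)=> v [beep_v conn_v]; exists v; split=> //.
apply: (connect_trans conn_v); apply: connect1; apply/existsP.
exists (F, lanes (parity m)); apply/and3P; split=> //=.
  by apply/eqP/fwdP; rewrite tau_x tau_y.
rewrite -B_opp part_bwd ?Sx // part_fwd ?Sx ?side_lanesb //.
have act_x : at_pos tau act m.+1 = (x \in act) by rewrite -tau_x at_pos_tau.
by rewrite act_x addbC.
Qed.

Lemma recv_chain u b : u \notin S ->
  recv line_algorithm o d c u (F, lanes b) =
  (last_src src (tau u) != None) && (b == parity (tau u)).
Proof.
move=> Su; rewrite /recv ffunE /=; apply/idP/idP.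
  case/existsP=> v /existsP[p /andP[beep_v /chain_label_connect]].
  rewrite -(part_fwd Su (side_lanesb b)) chain_label_fwd.
  case: (boolP (right_lane (line_part (c v) p).2 == side)) => [/eqP side_p | side_p];
    last by rewrite chain_label_off.
  have Sv : v \in S by move: beep_v; rewrite /line_beep c_src => /andP[].
  have [_ _ _ _ tau_inj _ _] := line.
  have src_v : src (tau v) by rewrite at_pos_tau.
  rewrite (beep_side beep_v side_p).
  have -> : (F, l0) = line_part (c v) (F, l0) by rewrite part_src.
  rewrite (chain_label_fwd v false) last_src_at_src // parity_since_src_at_src //.
  by case=> <-; case: b; case: parity.
case/andP=> has_src /eqP ->; have [v [beep_v conn_v]] := chain_reach has_src.
apply/existsP; exists v; apply/existsP; exists (F, l0); rewrite beep_v /=.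
by rewrite (part_fwd Su (side_lanesb _)) in conn_v.
Qed.

End ChainCircuit.

Section LineRun.
Variables (n : nat) (o : node) (d : 'I_6) (S : {set 'I_n}).

Local Notation F := (fwd d).
Local Notation tL := (@coordL n d).
Local Notation tR := (fun x => n.-1 - @coordL n d x).

Lemma line_left : oriented_line (nbr o d) F (opp F) tL.
Proof. exact: line_oriented. Qed.

Lemma line_right : oriented_line (nbr o d) (opp F) F tR.
Proof. exact: (oriented_line_rev line_left). Qed.

Lemma coordL_compl x : tL x + tR x = n.-1.
Proof. by have := line_lt line_left x; lia. Qed.

Section Configuration.
Variable c : 'I_n -> state.
Hypothesis c_src : forall x, st_src (c x) = (x \in S).
Hypothesis c_fwd : forall x, st_fwd (c x) = F.

Lemma recv_left u b : u \notin S ->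
  recv line_algorithm o d c u (F, if b then lane 1 else lane 0) =
  (last_src (at_pos tL S) (tL u) != None) &&
  (b == parity_since_src (at_pos tL S) (at_pos tL [pred y | st_actL (c y)]) (tL u)).
Proof.
apply: (recv_chain line_left (side := false)) => //.
- by rewrite right_lane_lane.
- by rewrite right_lane_lane.
- by rewrite lane_eq.
- by move=> l; case: (lane_cases l) => ->; rewrite right_lane_lane //; [left | right].
- move=> x l Sx side_l.
  by rewrite /line_part c_src (negbTE Sx) c_fwd eq_oppF eqxx /= -/(right_lane l) side_l.
- move=> x b' Sx; rewrite /line_part c_src (negbTE Sx) c_fwd eqxx inE /=.
  by case: b'; case: st_actL; rewrite /= inordK ?swap_lane_lane.
- move=> x l; rewrite /line_beep c_fwd => /andP[_ /orP[/eqP -> // | /eqP ->]].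
  by rewrite /= right_lane_lane.
- by move=> x Sx; rewrite /line_beep c_src Sx c_fwd eqxx.
Qed.

Lemma recv_right u b : u \notin S ->
  recv line_algorithm o d c u (opp F, if b then lane 3 else lane 2) =
  (last_src (at_pos tR S) (tR u) != None) &&
  (b == parity_since_src (at_pos tR S) (at_pos tR [pred y | st_actR (c y)]) (tR u)).
Proof.
apply: (recv_chain line_right (side := true)) => //.
- by rewrite right_lane_lane.
- by rewrite right_lane_lane.
- by rewrite lane_eq.
- by move=> l; case: (lane_cases l) => ->; rewrite right_lane_lane //; [left | right].
- move=> x l Sx side_l.
  by rewrite /line_part c_src (negbTE Sx) c_fwd opp_eqF eqxx /= ltnNge -/(right_lane l) side_l.
- move=> x b' Sx; rewrite /line_part c_src (negbTE Sx) c_fwd eq_oppF eqxx inE /=.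
  by case: b'; case: st_actR; rewrite /= inordK ?swap_lane_lane.
- move=> x l; rewrite /line_beep c_fwd => /andP[_ /orP[/eqP -> | /eqP -> //]].
  by rewrite /= right_lane_lane.
- by move=> x Sx; rewrite /line_beep c_src Sx c_fwd !eqxx orbT.
Qed.

End Configuration.

Local Notation c j := (run line_algorithm o d S j).

Lemma run_src j x : st_src (c j x) = (x \in S).
Proof. by elim: j x => [|j IH] x //=; rewrite /line_delta IH; case: ifP => Sx; rewrite ?IH. Qed.

Lemma run_fwd j x : st_fwd (c j x) = st_fwd (c 0 x).
Proof. by elim: j => [|j IH] //=; rewrite /line_delta; case: ifP. Qed.

Lemma init_fwd x : 1 < n -> st_fwd (c 0 x) = F.
Proof.
move=> n_gt1; rewrite /= /st_fwd /=; case: pickP => [e | no_nbr].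
  rewrite /occupied ffunE; case E: nbr => [y|] // _; apply/val_inj.
  by case/nbr_lineP: E => -[-> _]; rewrite /= ?opp_mod3.
suff [e [y E]] : exists e y, nbr o d x e = Some y by have := no_nbr e; rewrite ffunE E.
case: (ltnP x.+1 n) => [lt_x1n | le_nx1]; first by exists d, (Ordinal lt_x1n); apply/nbr_lineP; left.
have lt_x'n : x.-1 < n by have := ltn_ord x; lia.
exists (opp d), (Ordinal lt_x'n); apply/nbr_lineP; right; split=> //=; lia.
Qed.

Definition gap_inv j x : Prop := [/\
  st_actL (c j x) = (if src_gap S tL x is Some g then 2 ^ j %| g else true),
  st_actR (c j x) = (if src_gap S tR x is Some g then 2 ^ j %| g else true),
  st_seenL (c j x) = (0 < j) && (src_gap S tL x != None),
  st_seenR (c j x) = (0 < j) && (src_gap S tR x != None) &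
  forall gl gr, src_gap S tL x = Some gl -> src_gap S tR x = Some gr ->
    st_leq (c j x) = (gl %% 2 ^ j <= gr %% 2 ^ j)].

Lemma gap_inv0 x : gap_inv 0 x.
Proof.
by split=> [||||gl gr _ _] //=; rewrite ?modn1 //; case: src_gap => *; rewrite ?dvd1n.
Qed.

Lemma nonsrc_line_gt1 x : S != set0 -> x \notin S -> 1 < n.
Proof.
case/set0Pn=> s Ss Sx; have : s != x by apply: contraNneq Sx => <-.
by rewrite -(inj_eq (@ord_inj n)); have := ltn_ord s; have := ltn_ord x; lia.
Qed.

Hypothesis n_gt1 : 1 < n.

Lemma gap_invS j : (forall y, y \notin S -> gap_inv j y) ->
  forall x, x \notin S -> gap_inv j.+1 x.
Proof.
move=> inv_j x Sx; have [actL actR _ _ leq_j] := inv_j x Sx.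
have fwd_j y : st_fwd (c j y) = F by rewrite run_fwd init_fwd.
have pow_gt0 : 0 < 2 ^ j by rewrite expn_gt0.
have bitL gl : src_gap S tL x = Some gl -> parity_since_src (at_pos tL S)
    (at_pos tL [pred y | st_actL (c j y)]) (tL x) = odd (gl %/ 2 ^ j).
  apply: (parity_since_src_gap line_left) => // y g Sy gap_y.
  by case: (inv_j y Sy); rewrite inE gap_y.
have bitR gr : src_gap S tR x = Some gr -> parity_since_src (at_pos tR S)
    (at_pos tR [pred y | st_actR (c j y)]) (tR x) = odd (gr %/ 2 ^ j).
  apply: (parity_since_src_gap line_right) => // y g Sy gap_y.
  by case: (inv_j y Sy); rewrite inE gap_y.
have recvL0 := recv_left (run_src j) fwd_j false Sx.
have recvL1 := recv_left (run_src j) fwd_j true Sx.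
have recvR2 := recv_right (run_src j) fwd_j false Sx.
have recvR3 := recv_right (run_src j) fwd_j true Sx.
rewrite /gap_inv; have -> : c j.+1 x = line_delta (c j x) (recv line_algorithm o d (c j) x) by [].
rewrite /line_delta run_src (negbTE Sx) fwd_j /= in recvL0 recvL1 recvR2 recvR3 *.
rewrite recvL0 recvL1 recvR2 recvR3 !has_src_gap.
move: actL bitL leq_j; case: (src_gap S tL x) => [gl|] actL bitL leq_j;
move: actR bitR leq_j; case: (src_gap S tR x) => [gr|] actR bitR leq_j;
rewrite ?(bitL _ erefl) ?(bitR _ erefl) actL actR ?(leq_j _ _ erefl erefl).
all: rewrite /st_actL /st_actR /st_seenL /st_seenR /st_leq /=.
all: split=> [||||? ? gapL gapR] //=; try by [case: gapL | case: gapR].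
all: rewrite ?dvdn_exp2S; try by case: odd.
case: gapL gapR => <- [<-]; rewrite leq_mod_exp2S.
by case: (odd (gl %/ _)); case: (odd (gr %/ _)).
Qed.

Lemma gap_inv_run j x : x \notin S -> gap_inv j x.
Proof. by elim: j x => [|j IH] x; [move=> _; exact: gap_inv0 | apply: gap_invS]. Qed.

Lemma run_out t x : x \notin S -> n < 2 ^ t ->
  line_out (c t x) =
  match src_gap S tL x, src_gap S tR x with
  | Some gl, Some gr => Some (if gl <= gr then opp F else F)
  | Some _, None => Some (opp F)
  | None, Some _ => Some F
  | None, None => None
  end.
Proof.
move=> Sx lt_n2t; have [_ _ seenL seenR leq_t] := gap_inv_run t Sx.
have t_gt0 : 0 < t by case: t lt_n2t {seenL seenR leq_t} => //; lia.
have gap_lt (tau : 'I_n -> nat) g : injective tau -> (forall y, tau y < n) ->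
    src_gap S tau x = Some g -> g %% 2 ^ t = g.
  move=> tau_inj tau_lt /(src_gapP tau_inj)[s _ [tau_s _]]; rewrite modn_small //.
  by have := tau_lt x; lia.
have [_ _ _ _ injL ltL _] := line_left; have [_ _ _ _ injR ltR _] := line_right.
rewrite /line_out run_src (negbTE Sx) seenL seenR t_gt0 run_fwd init_fwd //=.
case EL: src_gap => [gl|]; case ER: src_gap => [gr|] //=.
by rewrite (leq_t _ _ EL ER) (gap_lt _ _ injL ltL EL) (gap_lt _ _ injR ltR ER); case: leqP.
Qed.

Lemma run_parent_step t x : x \notin S -> S != set0 -> n < 2 ^ t ->
  exists y, [/\ parent_at line_algorithm o d S t x = Some y, adjX o d x y &
    (dist_to S tL y).+1 = dist_to S tL x].
Proof.
move=> Sx S_neq0 lt_n2t; rewrite /parent_at /= run_out //.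
have toward_left g : src_gap S tL x = Some g ->
    (if src_gap S tR x is Some g' then g <= g' else true) ->
    exists y, [/\ obind (nbr o d x) (Some (opp F)) = Some y, adjX o d x y &
      (dist_to S tL y).+1 = dist_to S tL x].
  move=> gapL pref; have [y [nb_xy Dy]] := closer_behind line_left coordL_compl Sx gapL pref.
  by exists y; split=> //; exact: nbr_adjX nb_xy.
have toward_right g : src_gap S tR x = Some g ->
    (if src_gap S tL x is Some g' then g <= g' else true) ->
    exists y, [/\ obind (nbr o d x) (Some F) = Some y, adjX o d x y &
      (dist_to S tL y).+1 = dist_to S tL x].
  have compl y : tR y + tL y = n.-1 by rewrite addnC coordL_compl.
  move=> gapR pref; have [y [nb_xy Dy]] := closer_behind line_right compl Sx gapR pref.
  rewrite -!(dist_to_compl S coordL_compl) in Dy.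
  by exists y; split=> //; exact: nbr_adjX nb_xy.
case EL: src_gap => [gl|]; case ER: src_gap => [gr|].
- case: leqP => [le_lr | lt_rl].
    by apply: toward_left EL _; rewrite ER.
  by apply: toward_right ER _; rewrite EL ltnW.
- by apply: toward_left EL _; rewrite ER.
- by apply: toward_right ER _; rewrite EL.
case/set0Pn: S_neq0 => s Ss; have [_ _ _ _ injL _ _] := line_left.
have [_ _ _ _ injR _ _] := line_right.
have := src_gap_None injL EL Ss; have := src_gap_None injR ER Ss.
by have := coordL_compl x; have := coordL_compl s; lia.
Qed.

End LineRun.

Theorem mainTheorem10 :
  exists (Q : finType) (k : nat) (A : algorithm Q k) (C : nat),
    forall (n : nat) (o : node) (d : 'I_6) (S : {set 'I_n}),
      S != set0 ->
      exists T : nat, T <= C * (trunc_log 2 n).+1 /\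
        forall t : nat, T <= t ->
          is_SPF (adjX o d) S (parent_at A o d S t).
Proof.
exists state, 4, line_algorithm, 1 => n o d S S_neq0.
exists (trunc_log 2 n).+1; split=> [|t le_Tt]; first by rewrite mul1n.
have lt_n2t : n < 2 ^ t := leq_trans (trunc_log_ltn n (isT : 1 < 2)) (leq_pexp2l (isT : 0 < 2) le_Tt).
apply: (is_SPF_of_potential (D := dist_to S (@coordL n d))).
- by move=> u Su; rewrite /parent_at /= /line_out run_src Su.
- by move=> u; apply: dist_to_src.
- by move=> u Su; apply: (run_parent_step o d (nonsrc_line_gt1 S_neq0 Su)).
- by move=> a b /adjX_coordL; apply: dist_to_lipschitz.
Qed.
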